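(* Let $\mathbf{p}=(p^{(1)},\dots,p^{(n)})\in(0,1)^n$ with $\sum_ip^{(i)}=1$, and let $f_u(C^{(i)},C^{(j)})=p^{(i)}/(p^{(i)}+p^{(j)})$ for distinct $i,j$. For each $a\in[n]$ define the prefix weights $g_a$ on ordered pairs of distinct classes by $g_a(C^{(a)},C^{(b)})=1$ and $g_a(C^{(b)},C^{(a)})=0$ for $b\ne a$, and $g_a(C^{(b)},C^{(c)})=f_u(C^{(b)},C^{(c)})$ for distinct $b,c\ne a$. Then for all distinct $i,j\in[n]$, $$f_u(C^{(i)},C^{(j)})=\sum_{a=1}^n p^{(a)}\,g_a(C^{(i)},C^{(j)}).$$
   Context: $C^{(1)},\dots,C^{(n)}$ are class labels; $f_u$ are the situational expert graph weights and $g_a$ are the weights of the prefix expert graph with prefix $a$. *)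

From mathcomp Require Import all_boot all_order all_algebra.
Set Implicit Arguments. Unset Strict Implicit. Unset Printing Implicit Defensive.
Import Order.TTheory GRing.Theory Num.Theory.
Local Open Scope ring_scope.

(* Classes C^(1..n) are indexed by 'I_n. *)

Definition f_u (R : fieldType) (n : nat) (p : 'I_n -> R) (i j : 'I_n) : R :=
  p i / (p i + p j).

Definition g_pref (R : fieldType) (n : nat) (p : 'I_n -> R) (a i j : 'I_n) : R :=
  if i == a then 1
  else if j == a then 0
  else f_u p i j.

(* Mixing the prefix graphs with weights p: for a pair (i, j), the graph with
   prefix i contributes p_i, the one with prefix j contributes 0, and every other
   prefix graph agrees with f_u, so the mixture equals p_i + (1 - p_i - p_j) f_u.
   Since (p_i + p_j) f_u = p_i, this is f_u again. *)

From mathcomp Require Import all_boot all_order all_algebra.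
From mathcomp Require Import ring.
Import Order.TTheory GRing.Theory Num.Theory.
Local Open Scope ring_scope.

Section PrefixMixture.

Variables (R : fieldType) (n : nat) (p : 'I_n -> R).

Lemma g_pref_prefix_left (i j : 'I_n) : g_pref p i i j = 1.
Proof. by rewrite /g_pref eqxx. Qed.

Lemma g_pref_prefix_right (i j : 'I_n) : i != j -> g_pref p j i j = 0.
Proof. by move=> hij; rewrite /g_pref (negbTE hij) eqxx. Qed.

Lemma g_pref_off_prefix (a i j : 'I_n) :
  i != a -> j != a -> g_pref p a i j = f_u p i j.
Proof. by move=> hia hja; rewrite /g_pref (negbTE hia) (negbTE hja). Qed.

Lemma mulr_f_u_denom (i j : 'I_n) : p i + p j != 0 -> (p i + p j) * f_u p i j = p i.
Proof. by move=> hs; rewrite /f_u mulrC divfK. Qed.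

Lemma sum_prefix_mixture (i j : 'I_n) : i != j ->
  \sum_(a < n) p a * g_pref p a i j
  = p i + (\sum_(a < n | (a != i) && (a != j)) p a) * f_u p i j.
Proof.
move=> hij; rewrite (bigD1 i) // (bigD1 j) 1?eq_sym //=.
rewrite g_pref_prefix_left g_pref_prefix_right // mulr1 mulr0 add0r big_distrl /=.
congr (_ + _); apply: eq_bigr => a /andP [hai haj].
by rewrite g_pref_off_prefix // eq_sym.
Qed.

Lemma f_u_prefix_mixture (i j : 'I_n) :
  \sum_(a < n) p a = 1 -> i != j -> p i + p j != 0 ->
  f_u p i j = \sum_(a < n) p a * g_pref p a i j.
Proof.
move=> hsum hij hs; rewrite sum_prefix_mixture //.
have hrest : \sum_(a < n | (a != i) && (a != j)) p a = 1 - (p i + p j).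
  by move: hsum; rewrite (bigD1 i) // (bigD1 j) 1?eq_sym //= => <-; ring.
rewrite hrest mulrBl mul1r mulr_f_u_denom //; ring.
Qed.

End PrefixMixture.

Theorem lemma9 (R : realFieldType) (n : nat) (p : 'I_n -> R)
  (hp : forall i, 0 < p i /\ p i < 1)
  (hsum : \sum_(i < n) p i = 1)
  (i j : 'I_n) (hij : i != j) :
  f_u p i j = \sum_(a < n) p a * g_pref p a i j.
Proof.
apply: f_u_prefix_mixture => //.
by rewrite lt0r_neq0 // addr_gt0 //; [case: (hp i) | case: (hp j)].
Qed.
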